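(* Let $X$, $(Y,d_Y)$, $(Z,d_Z)$ be Polish (metric) spaces, $M$ a set, and $P: X \rightsquigarrow Y$, $Q: Y \rightsquigarrow Z$ tight Feller kernels. For $\mu \in \mathcal{P}(Y)$ write $\mu Q = \int Q(y,\cdot)\,d\mu(y)$, and assume $W_1(\mu Q, \nu Q) \le L\, W_1(\mu,\nu)$ for all $\mu,\nu \in \mathcal{P}(Y)$. Then for any $\delta, \epsilon \ge 0$ and any relation $R \subseteq X \times M$, $$Q_{!W}^\epsilon(P_{!W}^\delta R) \subseteq (Q \circ P)_{!W}^{L\delta+\epsilon} R.$$
   Context: $W_1(\mu,\nu) = \inf_{\pi \in \Pi(\mu,\nu)} \int d(y,y')\,d\pi(y,y')$ (possibly $+\infty$). Composite kernel: $(Q \circ P)(x) = P(x)Q$, i.e. $(Q\circ P)(x,C) = \int Q(y,C)\,P(x,dy)$. Wasserstein pushforward of a relation: $P_{!W}^\delta R = \{(\nu,m) \in \mathcal{P}(Y) \times M : \exists x,\ (x,m) \in R,\ W_1(P(x),\nu) \le \delta\}$. For a set $\mathcal{M} \subseteq \mathcal{P}(Y) \times M$, $Q_{!W}^\epsilon \mathcal{M} = \{(\gamma,m) \in \mathcal{P}(Z) \times M : \exists \nu,\ (\nu,m) \in \mathcal{M},\ W_1(\nu Q, \gamma) \le \epsilon\}$; for $R \subseteq X \times M$, $(Q\circ P)_{!W}^\eta R = \{(\gamma,m) : \exists x,\ (x,m) \in R,\ W_1((Q\circ P)(x), \gamma) \le \eta\}$. *)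

From HB Require Import structures.
From mathcomp Require Import all_boot all_order all_algebra.
From mathcomp Require Import all_classical all_reals all_analysis.
Set Implicit Arguments. Unset Strict Implicit. Unset Printing Implicit Defensive.
Import Order.TTheory GRing.Theory Num.Theory.
Import numFieldNormedType.Exports.
Local Open Scope classical_set_scope.
Local Open Scope ring_scope.
Local Open Scope ereal_scope.

Definition borel (T : ptopologicalType) := g_sigma_algebraType (@open T).

Section Defs.
Variable R : realType.

Definition polish (T : completePseudoMetricType R) : Prop :=
  hausdorff_space T /\ exists D : set T, countable D /\ closure D = setT.

Definition compatible_metric (T : pseudoMetricType R) (d : T -> T -> R) : Prop :=
  [/\ forall x y, (0 <= d x y)%R,
      forall x y, d x y = 0%R <-> x = y,
      forall x y, d x y = d y x,
      forall x y z, (d x z <= d x y + d y z)%R &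
      forall x (e : R), (0 < e)%R -> ball x e = [set y | (d x y < e)%R]].

Definition is_coupling (T : completePseudoMetricType R)
  (mu nu : set (borel T) -> \bar R) (pi : probability (borel T * borel T)%type R) :=
  forall A : set (borel T), measurable A ->
    pi (A `*` setT) = mu A /\ pi (setT `*` A) = nu A.

(* 1-Wasserstein distance (possibly +oo; inf of the empty set is +oo) *)
Definition W1 (T : completePseudoMetricType R) (d : T -> T -> R)
  (mu nu : set (borel T) -> \bar R) : \bar R :=
  ereal_inf [set (\int[pi]_z (d z.1 z.2)%:E) | pi in is_coupling mu nu].

(* mu Q = \int Q(y, .) dmu(y) ; also (Q o P)(x) = mpush (P x) Q *)
Definition mpush (Y Z : ptopologicalType) (mu : set (borel Y) -> \bar R)
  (Q : R.-pker (borel Y) ~> (borel Z)) : set (borel Z) -> \bar R :=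
  fun C => \int[mu]_y Q y C.

Definition feller (X Y : ptopologicalType) (P : R.-pker (borel X) ~> (borel Y)) :=
  forall f : Y -> R, continuous f -> (exists M : R, forall y, (`|f y| <= M)%R) ->
    continuous (fun x : X => fine (\int[P x]_y (f y)%:E)).

Definition tight_kernel (X Y : ptopologicalType) (P : R.-pker (borel X) ~> (borel Y)) :=
  forall K : set X, compact K -> forall e : R, (0 < e)%R ->
    exists C : set Y, compact C /\ forall x, K x -> ((1 - e)%:E <= P x C).

Definition pushW_rel (X : ptopologicalType) (Y : completePseudoMetricType R) (M : Type)
  (dY : Y -> Y -> R) (P : R.-pker (borel X) ~> (borel Y)) (delta : R)
  (Rel : set (X * M)) : set (probability (borel Y) R * M) :=
  [set p : probability (borel Y) R * M | exists x, Rel (x, p.2) /\ W1 dY (P x) p.1 <= delta%:E].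

Definition pushW_set (Y Z : completePseudoMetricType R) (M : Type)
  (dZ : Z -> Z -> R) (Q : R.-pker (borel Y) ~> (borel Z)) (eps : R)
  (Ms : set (probability (borel Y) R * M)) : set (probability (borel Z) R * M) :=
  [set p : probability (borel Z) R * M | exists nu : probability (borel Y) R,
     Ms (nu, p.2) /\ W1 dZ (mpush nu Q) p.1 <= eps%:E].

Definition pushW_comp (X Y : ptopologicalType) (Z : completePseudoMetricType R) (M : Type)
  (dZ : Z -> Z -> R) (P : R.-pker (borel X) ~> (borel Y))
  (Q : R.-pker (borel Y) ~> (borel Z)) (eta : R)
  (Rel : set (X * M)) : set (probability (borel Z) R * M) :=
  [set p : probability (borel Z) R * M | exists x, Rel (x, p.2) /\ W1 dZ (mpush (P x) Q) p.1 <= eta%:E].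

End Defs.

From HB Require Import structures.
From mathcomp Require Import all_boot all_order all_algebra.
From mathcomp Require Import all_classical all_reals all_analysis.
From mathcomp Require Import measurable_realfun lra.
Import Order.TTheory GRing.Theory Num.Theory.
Import numFieldNormedType.Exports.
Local Open Scope classical_set_scope.
Local Open Scope ring_scope.

(* The inclusion is the triangle inequality for W1 on the laws on Z combined
   with the Lipschitz hypothesis on Q: if W1(P x, nu) <= delta and
   W1(nu Q, gamma) <= eps then
     W1((P x) Q, gamma) <= W1((P x) Q, nu Q) + W1(nu Q, gamma) <= L delta + eps.

   The triangle inequality is proved by approximate gluing. Given couplings
   pi1 of (a, b) and pi2 of (b, c), cut the space into countably many disjoint
   measurable cells B_n, each within distance r of a point q_n of a dense
   sequence, and glue pi1 and pi2 independently over each cell: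
     gamma = sum_n pi1(. x B_n) (x) pi2(B_n x .) / b(B_n).
   Its marginals are a and c, and since d(x, z) <= d(x, q_n) + d(q_n, z) with
   d(x, q_n) <= d(x, y) + r for y in B_n, the cost of gamma is at most
   cost(pi1) + cost(pi2) + 2r. *)

Section probability_of.
Context {d} {T : measurableType d} {R : realType} {mu : {measure set T -> \bar R}}.

Definition probability_of (_ : mu setT = 1%E) : set T -> \bar R := mu.

Variable mu1 : mu setT = 1%E.
HB.instance Definition _ := Measure.on (probability_of mu1).
HB.instance Definition _ :=
  Measure_isProbability.Build _ _ _ (probability_of mu1) mu1.
End probability_of.

Lemma trivIset_setXl {T1 T2} (F : nat -> set T1) (B : set T2) :
  trivIset setT F -> trivIset setT (fun n => F n `*` B).
Proof.
move/trivIsetP => tF; apply/trivIsetP => i j _ _ ij.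
by rewrite -setXI tF // set0X.
Qed.

Lemma trivIset_setXr {T1 T2} (A : set T1) (F : nat -> set T2) :
  trivIset setT F -> trivIset setT (fun n => A `*` F n).
Proof.
move/trivIsetP => tF; apply/trivIsetP => i j _ _ ij.
by rewrite -setXI tF // setX0.
Qed.

Section marginals.
Context {d1 d2} {T1 : measurableType d1} {T2 : measurableType d2} {R : realType}.
Variable m : {finite_measure set (T1 * T2)%type -> \bar R}.

Definition mfst {B : set T2} (mB : measurable B) : set T1 -> \bar R :=
  fun A => m (A `*` B).
Definition msnd {A : set T1} (mA : measurable A) : set T2 -> \bar R :=
  fun B => m (A `*` B).

Section mfst.
Variables (B : set T2) (mB : measurable B).

Let mfst0 : mfst mB set0 = 0%E.
Proof. by rewrite /mfst set0X measure0. Qed.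

Let mfst_ge0 A : (0 <= mfst mB A)%E.
Proof. exact: measure_ge0. Qed.

Let mfst_sigma_additive : semi_sigma_additive (mfst mB).
Proof.
move=> F mF tF mUF; rewrite /mfst setX_bigcupl.
apply: measure_semi_sigma_additive => [n||].
- exact: measurableX.
- exact: trivIset_setXl.
- by rewrite -setX_bigcupl; exact: measurableX.
Qed.

HB.instance Definition _ :=
  isMeasure.Build _ _ _ (mfst mB) mfst0 mfst_ge0 mfst_sigma_additive.

Let mfst_fin : fin_num_fun (mfst mB).
Proof. by move=> A mA; apply: fin_num_measure; exact: measurableX. Qed.

HB.instance Definition _ := @Measure_isFinite.Build _ T1 _ (mfst mB) mfst_fin.
End mfst.

Section msnd.
Variables (A : set T1) (mA : measurable A).

Let msnd0 : msnd mA set0 = 0%E.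
Proof. by rewrite /msnd setX0 measure0. Qed.

Let msnd_ge0 B : (0 <= msnd mA B)%E.
Proof. exact: measure_ge0. Qed.

Let msnd_sigma_additive : semi_sigma_additive (msnd mA).
Proof.
move=> F mF tF mUF; rewrite /msnd setX_bigcupr.
apply: measure_semi_sigma_additive => [n||].
- exact: measurableX.
- exact: trivIset_setXr.
- by rewrite -setX_bigcupr; exact: measurableX.
Qed.

HB.instance Definition _ :=
  isMeasure.Build _ _ _ (msnd mA) msnd0 msnd_ge0 msnd_sigma_additive.

Let msnd_fin : fin_num_fun (msnd mA).
Proof. by move=> B mB; apply: fin_num_measure; exact: measurableX. Qed.

HB.instance Definition _ := @Measure_isFinite.Build _ T2 _ (msnd mA) msnd_fin.
End msnd.
End marginals.

Section integral_restriction.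
Local Open Scope ereal_scope.
Context {d} {T : measurableType d} {R : realType} (m : {measure set T -> \bar R}).

Lemma ge0_integral_mrestr (S : set T) (mS : measurable S) (f : T -> \bar R) :
  measurable_fun setT f -> (forall x, 0 <= f x) ->
  \int[mrestr m mS]_x f x = \int[m]_(x in S) f x.
Proof.
move=> mf f0; rewrite -(setUv S) ge0_integral_setU //; last 3 first.
- exact: measurableC.
- by rewrite setUv.
- by apply/disj_set2P; rewrite setICr.
rewrite [X in _ + X]null_set_integral ?adde0 //; last 3 first.
- exact: measurableC.
- exact: measurable_funS mf.
- by rewrite -[LHS]/(m (~` S `&` S)) setICl measure0.
apply: eq_measure_integral => A mA AS.
by rewrite -[LHS]/(m (A `&` S)) setIidl.
Qed.
End integral_restriction.

Section integral_marginals.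
Local Open Scope ereal_scope.
Context {d1 d2} {T1 : measurableType d1} {T2 : measurableType d2} {R : realType}.
Variable m : {finite_measure set (T1 * T2)%type -> \bar R}.

Lemma ge0_integral_mfst (B : set T2) (mB : measurable B) (g : T1 -> \bar R) :
  measurable_fun setT g -> (forall x, 0 <= g x) ->
  \int[mfst m mB]_x g x = \int[m]_(z in setT `*` B) g z.1.
Proof.
move=> mg g0; have mTB : measurable (@setT T1 `*` B) by exact: measurableX.
transitivity (\int[pushforward (mrestr m mTB) fst]_x g x).
  apply: eq_measure_integral => A mA _; rewrite /pushforward /mrestr /mfst.
  by congr (m _); apply/seteqP; split => -[x y] /=;
    rewrite /preimage /setX /=; tauto.
rewrite ge0_integral_pushforward // preimage_setT ge0_integral_mrestr //=.
exact: measurableT_comp.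
Qed.

Lemma ge0_integral_msnd (A : set T1) (mA : measurable A) (g : T2 -> \bar R) :
  measurable_fun setT g -> (forall x, 0 <= g x) ->
  \int[msnd m mA]_x g x = \int[m]_(z in A `*` setT) g z.2.
Proof.
move=> mg g0; have mAT : measurable (A `*` @setT T2) by exact: measurableX.
transitivity (\int[pushforward (mrestr m mAT) snd]_x g x).
  apply: eq_measure_integral => B mB _; rewrite /pushforward /mrestr /msnd.
  by congr (m _); apply/seteqP; split => -[x y] /=;
    rewrite /preimage /setX /=; tauto.
rewrite ge0_integral_pushforward // preimage_setT ge0_integral_mrestr //=.
exact: measurableT_comp.
Qed.
End integral_marginals.

Section integral_product.
Local Open Scope ereal_scope.
Context {d1 d2} {T1 : measurableType d1} {T2 : measurableType d2} {R : realType}.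
Variables (m1 : {sigma_finite_measure set T1 -> \bar R})
          (m2 : {sigma_finite_measure set T2 -> \bar R}).

Lemma ge0_integral_prod_fst (f : T1 -> \bar R) :
  measurable_fun setT f -> (forall x, 0 <= f x) ->
  \int[m1 \x m2]_z f z.1 = \int[m1]_x f x * m2 setT.
Proof.
move=> mf f0; rewrite fubini_tonelli1 //; last exact: measurableT_comp.
rewrite /fubini_F -ge0_integralZr //; apply: eq_integral => x _.
exact: (integral_cst m2 measurableT (f x)).
Qed.

Lemma ge0_integral_prod_snd (f : T2 -> \bar R) :
  measurable_fun setT f -> (forall x, 0 <= f x) ->
  \int[m1 \x m2]_z f z.2 = \int[m2]_y f y * m1 setT.
Proof.
move=> mf f0; rewrite fubini_tonelli2 //; last exact: measurableT_comp.
rewrite /fubini_G -ge0_integralZr //; apply: eq_integral => y _.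
exact: (integral_cst m1 measurableT (f y)).
Qed.
End integral_product.

Lemma ge0_integral_partition {d} {T : measurableType d} {R : realType}
    (m : {measure set T -> \bar R}) (F : nat -> set T) (f : T -> \bar R) :
  (forall n, measurable (F n)) -> trivIset setT F -> \bigcup_n F n = setT ->
  measurable_fun setT f -> (forall x, (0 <= f x)%E) ->
  (\sum_(n <oo) \int[m]_(x in F n) f x = \int[m]_x f x)%E.
Proof.
move=> mF tF FT mf f0.
by rewrite -ge0_integral_bigcup ?FT // => x _; exact: f0.
Qed.

Definition dense_seq {R : realType} {T : Type} (d : T -> T -> R) (q : nat -> T) :=
  forall y e, 0 < e -> exists n, d (q n) y < e.

Section compatible_metric.
Context {R : realType} {T : completePseudoMetricType R} {d : T -> T -> R}.
Hypothesis hd : compatible_metric d.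

Lemma cmetric_ge0 x y : 0 <= d x y. Proof. by case: hd. Qed.
Lemma cmetricC x y : d x y = d y x. Proof. by case: hd. Qed.
Lemma cmetric_triangle x y z : d x z <= d x y + d y z. Proof. by case: hd. Qed.
Lemma cmetric_ball x e : 0 < e -> ball x e = [set y | d x y < e].
Proof. by case: hd => _ _ _ _; apply. Qed.

Lemma continuous_cmetric q : continuous (d ^~ q).
Proof.
move=> x; apply/cvgrPdist_lt => e e0; apply/nbhs_ballP; exists e => //= y.
rewrite cmetric_ball //= => dxy.
have := cmetric_triangle x y q; have := cmetric_triangle y x q.
by rewrite (cmetricC y x) ltr_norml => *; apply/andP; split; lra.
Qed.

Lemma measurable_cmetric q : measurable_fun setT (fun x : borel T => d x q).
Proof.
apply: (measurability _ (RGenOpens.measurableE R)).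
move=> _ [_ [a [b ->] <-]]; rewrite setTI; apply: sub_sigma_algebra.
by apply: (continuousP _).1; [exact: continuous_cmetric|exact: interval_open].
Qed.

Lemma measurable_cmetric_ball q r :
  measurable ([set y | d q y < r] : set (borel T)).
Proof.
have := measurable_cmetric q measurableT _ (measurable_itv `]-oo, r[).
rewrite setTI; congr measurable; apply/seteqP; split => y /=;
  by rewrite in_itv /= cmetricC.
Qed.

Lemma separable_dense_seq : (exists D : set T, countable D /\ closure D = setT) ->
  T -> exists q : nat -> T, dense_seq d q.
Proof.
move=> [D [/countable_injP [f finj] clD]] x0.
pose q n :=
  if pselect (exists x, D x /\ f x = n) is left h then projT1 (cid h) else x0.
exists q => y e e0.
have : closure D y by rewrite clD.
move=> /(_ (ball y e) (nbhsx_ballx _ _ e0)) [x [Dx]].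
rewrite cmetric_ball //= => dyx.
exists (f x); rewrite /q; case: pselect => [h|]; last by case; exists x.
case: (cid h) => x' [Dx' fx'] /=.
have -> : x' = x by apply: finj => //; rewrite inE.
by rewrite cmetricC.
Qed.

Lemma measurable_cmetric2 {q : nat -> T} : dense_seq d q ->
  measurable_fun setT (fun z : (borel T * borel T)%type => (d z.1 z.2)%:E).
Proof.
move=> q_dense.
have -> : (fun z : (borel T * borel T)%type => (d z.1 z.2)%:E) =
    (fun z => einfs (fun n => (d z.1 (q n) + d (q n) z.2)%:E) 0).
  apply/funext => -[x y] /=; apply/esym/le_anti/andP; split.
  - apply/lee_addgt0Pr => e e0.
    have [n qny] := q_dense y (e / 2) (divr_gt0 e0 (ltr0Sn _ 1)).
    apply: ge_ereal_inf; exists ((d x (q n) + d (q n) y)%:E); first by exists n.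
    rewrite lee_fin; have := cmetric_triangle x y (q n).
    by rewrite (cmetricC y (q n)); lra.
  - by apply/ereal_infP => _ [n _ <-]; rewrite lee_fin; exact: cmetric_triangle.
apply: measurable_fun_einfs => n; apply/measurable_EFinP; apply: measurable_funD.
- exact: measurableT_comp (measurable_cmetric (q n)) measurable_fst.
- under eq_fun do rewrite cmetricC.
  exact: measurableT_comp (measurable_cmetric (q n)) measurable_snd.
Qed.
End compatible_metric.

Section approximate_gluing.
Local Open Scope ereal_scope.
Context {R : realType} {T : completePseudoMetricType R} {d : T -> T -> R}.
Hypothesis hd : compatible_metric d.
Context {q : nat -> T}.
Hypothesis q_dense : dense_seq d q.
Context {r : R}.
Hypothesis r_gt0 : (0 < r)%R.
Context {p1 p2 : probability (borel T * borel T)%type R}.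
Hypothesis p12 : forall B : set (borel T), measurable B ->
  p1 (setT `*` B) = p2 (B `*` setT).

Let cell := seqDU (fun n => [set y : borel T | (d (q n) y < r)%R]).

Let measurable_cell n : measurable (cell n).
Proof.
apply: measurableD; first exact: measurable_cmetric_ball.
by apply: bigsetU_measurable => i _; exact: measurable_cmetric_ball.
Qed.

Let bigcup_cell : \bigcup_n cell n = setT.
Proof.
rewrite -seqDU_bigcup_eq; apply/seteqP; split => // y _.
by have [n ?] := q_dense y _ r_gt0; exists n.
Qed.

Let cell_near n y : cell n y -> (d (q n) y < r)%R.
Proof. by case. Qed.

Let beta n : R := fine (p1 (setT `*` cell n)).

Let beta_fst n : (beta n)%:E = p1 (setT `*` cell n).
Proof. by rewrite fineK // fin_num_measure //; exact: measurableX. Qed.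

Let beta_snd n : (beta n)%:E = p2 (cell n `*` setT).
Proof. by rewrite beta_fst p12. Qed.

Let beta0_fst n A : measurable A -> beta n = 0%R -> p1 (A `*` cell n) = 0.
Proof.
move=> mA b0; apply/eqP; rewrite eq_le measure_ge0 andbT -[leRHS]/(0%R%:E) -b0.
rewrite beta_fst le_measure ?inE //; try exact: measurableX.
by move=> [x y] [].
Qed.

Let beta0_snd n C : measurable C -> beta n = 0%R -> p2 (cell n `*` C) = 0.
Proof.
move=> mC b0; apply/eqP; rewrite eq_le measure_ge0 andbT -[leRHS]/(0%R%:E) -b0.
rewrite beta_snd le_measure ?inE //; try exact: measurableX.
by move=> [x y] [].
Qed.

Let invbeta_ge0 n : (0 <= (beta n)^-1)%R.
Proof. by rewrite invr_ge0 fine_ge0 // measure_ge0. Qed.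

Let alpha n := mfst p1 (measurable_cell n).

(* rho n is the conditional law under p2 of the second coordinate given that
   the first one lies in cell n; when this event is null, (beta n)^-1 = 0 and
   the n-th piece of gamma0 vanishes. *)
Let rho n := mscale (NngNum (invbeta_ge0 n)) (msnd p2 (measurable_cell n)).
Let gamma0 := mseries (fun n => alpha n \x rho n) 0.

Let piece_rect n A C : measurable A -> measurable C ->
  (alpha n \x rho n) (A `*` C) =
  p1 (A `*` cell n) * ((beta n)^-1%:E * p2 (cell n `*` C)).
Proof. by move=> mA mC; rewrite product_measure1E. Qed.

Let piece_fst n A : measurable A ->
  (alpha n \x rho n) (A `*` setT) = p1 (A `*` cell n).
Proof.
move=> mA; rewrite piece_rect // -beta_snd -EFinM.
have [b0|b0] := eqVneq (beta n) 0%R; last by rewrite mulVf // mule1.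
by rewrite beta0_fst // mul0e.
Qed.

Let piece_snd n C : measurable C ->
  (alpha n \x rho n) (setT `*` C) = p2 (cell n `*` C).
Proof.
move=> mC; rewrite piece_rect // -beta_fst muleA -EFinM.
have [b0|b0] := eqVneq (beta n) 0%R; last by rewrite mulfV // mul1e.
by rewrite beta0_snd // mule0.
Qed.

Let gamma0_fst A : measurable A -> gamma0 (A `*` setT) = p1 (A `*` setT).
Proof.
move=> mA; rewrite /gamma0 /mseries (eq_eseriesr (fun n _ => piece_fst n A mA)).
rewrite -[in RHS]bigcup_cell setX_bigcupr measure_semi_bigcup //.
- by move=> n; exact: measurableX.
- exact/trivIset_setXr/trivIset_seqDU.
- by rewrite -setX_bigcupr bigcup_cell; exact: measurableX.
Qed.

Let gamma0_snd C : measurable C -> gamma0 (setT `*` C) = p2 (setT `*` C).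
Proof.
move=> mC; rewrite /gamma0 /mseries (eq_eseriesr (fun n _ => piece_snd n C mC)).
rewrite -[in RHS]bigcup_cell setX_bigcupl measure_semi_bigcup //.
- by move=> n; exact: measurableX.
- exact/trivIset_setXl/trivIset_seqDU.
- by rewrite -setX_bigcupl bigcup_cell; exact: measurableX.
Qed.

Let gamma0_setT : gamma0 setT = 1.
Proof. by rewrite -setXTT gamma0_snd // setXTT probability_setT. Qed.

Let gamma := probability_of gamma0_setT.

Let dist_ge0 x y : 0 <= (d x y)%:E.
Proof. by rewrite lee_fin (cmetric_ge0 hd). Qed.

Let costr_ge0 (z : borel T * borel T) : 0 <= (d z.1 z.2)%:E + r%:E.
Proof. by rewrite adde_ge0 ?dist_ge0 // lee_fin ltW. Qed.

Let measurable_cost :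
  measurable_fun setT (fun z : (borel T * borel T)%type => (d z.1 z.2)%:E).
Proof. exact: (measurable_cmetric2 hd q_dense). Qed.

Let measurable_costr :
  measurable_fun setT (fun z : (borel T * borel T)%type => (d z.1 z.2)%:E + r%:E).
Proof. exact: emeasurable_funD measurable_cost (measurable_cst _). Qed.

Let measurable_dist_to n : measurable_fun setT (fun x : borel T => (d x (q n))%:E).
Proof. by apply/measurable_EFinP; exact: measurable_cmetric hd (q n). Qed.

Let measurable_dist_from n :
  measurable_fun setT (fun y : borel T => (d (q n) y)%:E).
Proof.
under eq_fun do rewrite (cmetricC hd).
by apply/measurable_EFinP; exact: measurable_cmetric hd (q n).
Qed.

Let rho_setT n : rho n setT = (if beta n == 0%R then 0 else 1).
Proof.
rewrite /rho /mscale /= /msnd -beta_snd -EFinM.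
by have [->|b0] := eqVneq (beta n) 0%R; [rewrite invr0 mul0r|rewrite mulVf].
Qed.

Let alpha_cost n :
  \int[alpha n]_x (d x (q n))%:E * rho n setT <=
  \int[p1]_(z in setT `*` cell n) ((d z.1 z.2)%:E + r%:E).
Proof.
have mTB : measurable ([set: borel T] `*` cell n) by exact: measurableX.
rewrite rho_setT; case: ifPn => _; first by rewrite mule0 integral_ge0.
rewrite mule1 ge0_integral_mfst //.
apply: ge0_le_integral => //.
- exact: measurable_funTS (measurableT_comp (measurable_dist_to n) measurable_fst).
- exact: measurable_funTS measurable_costr.
- move=> [x y] [_ /cell_near ny] /=; rewrite -EFinD lee_fin.
  by have := cmetric_triangle hd x y (q n); rewrite (cmetricC hd y); lra.
Qed.

Let rho_cost n :
  \int[rho n]_y (d (q n) y)%:E * alpha n setT <=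
  \int[p2]_(z in cell n `*` setT) ((d z.1 z.2)%:E + r%:E).
Proof.
have mBT : measurable (cell n `*` [set: borel T]) by exact: measurableX.
have -> : alpha n setT = (beta n)%:E by rewrite beta_fst.
have [b0|b0] := eqVneq (beta n) 0%R; first by rewrite b0 mule0 integral_ge0.
rewrite ge0_integral_mscale //= ge0_integral_msnd // muleAC -EFinM mulVf // mul1e.
apply: ge0_le_integral => //.
- exact: measurable_funTS (measurableT_comp (measurable_dist_from n) measurable_snd).
- exact: measurable_funTS measurable_costr.
- move=> [x y] [/cell_near nx _] /=; rewrite -EFinD lee_fin.
  by have := cmetric_triangle hd (q n) x y; lra.
Qed.

Let piece_cost n :
  \int[alpha n \x rho n]_z (d z.1 z.2)%:E <=
  \int[p1]_(z in setT `*` cell n) ((d z.1 z.2)%:E + r%:E) +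
  \int[p2]_(z in cell n `*` setT) ((d z.1 z.2)%:E + r%:E).
Proof.
have mf := measurableT_comp (measurable_dist_to n) measurable_fst.
have mg := measurableT_comp (measurable_dist_from n) measurable_snd.
apply: (@le_trans _ _
  (\int[alpha n \x rho n]_z ((d z.1 (q n))%:E + (d (q n) z.2)%:E))).
  apply: ge0_le_integral => //; first exact: emeasurable_funD.
  by move=> z _; rewrite -EFinD lee_fin (cmetric_triangle hd).
rewrite ge0_integralD //.
rewrite (ge0_integral_prod_fst _ _ (fun x : borel T => (d x (q n))%:E)) //.
rewrite (ge0_integral_prod_snd _ _ (fun y : borel T => (d (q n) y)%:E)) //.
exact: leeD (alpha_cost n) (rho_cost n).
Qed.

Let integral_costr (p : probability (borel T * borel T)%type R) :
  \int[p]_z ((d z.1 z.2)%:E + r%:E) = \int[p]_z (d z.1 z.2)%:E + r%:E.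
Proof.
rewrite ge0_integralD // => [|z _]; last by rewrite lee_fin ltW.
by rewrite integral_cst //= probability_setT mule1.
Qed.

Let gamma_cost : \int[gamma]_z (d z.1 z.2)%:E <=
  \int[p1]_z (d z.1 z.2)%:E + \int[p2]_z (d z.1 z.2)%:E + (r + r)%:E.
Proof.
rewrite /gamma /probability_of /gamma0 ge0_integral_measure_series //.
apply: le_trans (lee_nneseries _ (fun n _ => piece_cost n)) _.
  by move=> n _ _; exact: integral_ge0.
rewrite nneseriesD => [|n _ _|n _ _]; try exact: integral_ge0.
rewrite (ge0_integral_partition _ (fun n => setT `*` cell n)) //; first last.
- by rewrite -setX_bigcupr bigcup_cell setXTT.
- exact/trivIset_setXr/trivIset_seqDU.
- by move=> n; exact: measurableX.
rewrite (ge0_integral_partition _ (fun n => cell n `*` setT)) //; first last.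
- by rewrite -setX_bigcupl bigcup_cell setXTT.
- exact/trivIset_setXl/trivIset_seqDU.
- by move=> n; exact: measurableX.
by rewrite !integral_costr EFinD addeACA.
Qed.

Lemma approx_gluing : exists gamma : probability (borel T * borel T)%type R,
  [/\ forall A, measurable A -> gamma (A `*` setT) = p1 (A `*` setT),
      forall C, measurable C -> gamma (setT `*` C) = p2 (setT `*` C) &
      \int[gamma]_z (d z.1 z.2)%:E <=
        \int[p1]_z (d z.1 z.2)%:E + \int[p2]_z (d z.1 z.2)%:E + (r + r)%:E].
Proof. by exists gamma; split; [exact: gamma0_fst|exact: gamma0_snd|]. Qed.
End approximate_gluing.

Section wasserstein_triangle.
Local Open Scope ereal_scope.
Context {R : realType} {T : completePseudoMetricType R} {d : T -> T -> R}.
Hypothesis hd : compatible_metric d.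

Lemma W1_ge0 (a b : set (borel T) -> \bar R) : 0 <= W1 d a b.
Proof.
apply/ereal_infP => _ [pi _ <-]; apply: integral_ge0 => z _.
by rewrite lee_fin (cmetric_ge0 hd).
Qed.

Lemma W1_triangle (a b c : set (borel T) -> \bar R) :
  (exists D : set T, countable D /\ closure D = setT) ->
  W1 d a c <= W1 d a b + W1 d b c.
Proof.
move=> sep; have [q q_dense] := separable_dense_seq hd sep point.
have := W1_ge0 b c; have := W1_ge0 a b.
case Eab : (W1 d a b) => [x| |] // x_ge0 bc_ge0; last first.
  by rewrite addye ?leey // gt_eqF // (lt_le_trans _ bc_ge0) // ltNye.
case Ebc : (W1 d b c) bc_ge0 => [y| |] // y_ge0; last by rewrite addey ?leey.
apply/lee_addgt0Pr => e e_gt0.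
have e3_gt0 : (0 < e / 3)%R by rewrite divr_gt0.
have e6_gt0 : (0 < e / 6)%R by rewrite divr_gt0.
have ab_fin : W1 d a b \is a fin_num by rewrite Eab.
have bc_fin : W1 d b c \is a fin_num by rewrite Ebc.
have [_ [pi1 pi1_ab <-]] := lb_ereal_inf_adherent e3_gt0 ab_fin.
rewrite -/(W1 d a b) Eab => pi1_cost.
have [_ [pi2 pi2_bc <-]] := lb_ereal_inf_adherent e3_gt0 bc_fin.
rewrite -/(W1 d b c) Ebc => pi2_cost.
have pi12 B : measurable B -> pi1 (setT `*` B) = pi2 (B `*` setT).
  by move=> mB; rewrite (pi1_ab B mB).2 (pi2_bc B mB).1.
have [gamma [gamma_fst gamma_snd gamma_cost]] :=
  approx_gluing hd q_dense e6_gt0 pi12.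
have gamma_ac : is_coupling a c gamma.
  move=> A mA; rewrite gamma_fst // gamma_snd //.
  by split; [exact: (pi1_ab A mA).1|exact: (pi2_bc A mA).2].
apply: le_trans (ereal_inf_lbound (ex_intro2 _ _ gamma gamma_ac erefl)) _.
apply: (le_trans gamma_cost).
apply: (@le_trans _ _ ((x + e / 3)%:E + (y + e / 3)%:E + (e / 6 + e / 6)%:E)).
  by apply: leeD => //; apply: leeD; apply: ltW; rewrite EFinD.
by rewrite -!EFinD lee_fin; lra.
Qed.
End wasserstein_triangle.

Theorem mainTheorem19 (R : realType)
  (X Y Z : completePseudoMetricType R) (M : Type)
  (dY : Y -> Y -> R) (dZ : Z -> Z -> R)
  (hX : polish X) (hY : polish Y) (hZ : polish Z)
  (hdY : compatible_metric dY) (hdZ : compatible_metric dZ)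
  (P : R.-pker (borel X) ~> (borel Y)) (Q : R.-pker (borel Y) ~> (borel Z))
  (hPF : feller P) (hPT : tight_kernel P)
  (hQF : feller Q) (hQT : tight_kernel Q)
  (L : R) (hL0 : 0 <= L)
  (hL : forall mu nu : probability (borel Y) R,
     (W1 dZ (mpush mu Q) (mpush nu Q) <= L%:E * W1 dY mu nu)%E)
  (delta eps : R) (hdelta : 0 <= delta) (heps : 0 <= eps)
  (Rel : set (X * M)) :
  pushW_set dZ Q eps (pushW_rel dY P delta Rel)
    `<=` pushW_comp dZ P Q (L * delta + eps) Rel.
Proof.
move=> [gamma m] [nu [[x [Rxm Px_nu]] Qnu_gamma]]; exists x; split => //=.
have Q_lip := hL (probability_of (prob_kernel (s := P) x)) nu.
apply: le_trans (W1_triangle hdZ _ (mpush nu Q) _ hZ.2) _.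
rewrite EFinD EFinM; apply: leeD => //.
by apply: le_trans Q_lip _; exact: lee_wpmul2l.
Qed.
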